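(* Let $R$ be a commutative ring with identity. If $R$ is semi-complemented, then $R$ is almost complemented.
   Context: $\mathfrak{N}(R)$ is the nilradical and $\mathrm{reg}(R)$ the set of regular elements (non-zero-divisors). An element $a$ is complemented if there is $b$ with $ab=0$ and $a+b\in\mathrm{reg}(R)$; a ring is complemented if all its elements are. $R$ is semi-complemented if every element of $R\setminus\mathfrak{N}(R)$ is complemented. $R$ is almost complemented if $R/\mathfrak{N}(R)$ is a complemented ring. *)

(* The nilradical is made a boolean predicate classically
   (mathcomp-classical boolp `asbool`), so that MathComp's ring quotient
   {ideal_quot _} (ring_quotient.v) can be used to form R / N(R). *)
From HB Require Import structures.
From mathcomp Require Import all_boot all_algebra ring_quotient.
From mathcomp Require Import boolp zify.
Set Implicit Arguments. Unset Strict Implicit. Unset Printing Implicit Defensive.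
Import GRing.Theory.
Local Open Scope ring_scope.

Definition nilpotent_el (R : comNzRingType) (x : R) : Prop :=
  exists n : nat, x ^+ n = 0.

Definition nilrad (R : comNzRingType) : {pred R} :=
  fun x => `[< nilpotent_el x >].
Arguments nilrad : clear implicits.

Definition regular (R : comNzRingType) (a : R) : Prop :=
  forall c : R, a * c = 0 -> c = 0.

Definition complemented_el (R : comNzRingType) (a : R) : Prop :=
  exists b : R, a * b = 0 /\ regular (a + b).

Definition complemented_ring (R : comNzRingType) : Prop :=
  forall a : R, complemented_el a.

Definition semi_complemented (R : comNzRingType) : Prop :=
  forall a : R, a \notin nilrad R -> complemented_el a.

Lemma nilradP (R : comNzRingType) (x : R) :
  reflect (nilpotent_el x) (x \in nilrad R).
Proof. by rewrite /nilrad unfold_in; apply: (iffP idP) => /asboolP. Qed.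

Lemma nilrad_idealr_closed (R : comNzRingType) : idealr_closed (nilrad R).
Proof.
split.
- by apply/nilradP; exists 1%N; rewrite expr1.
- apply/negP => /nilradP [n]; rewrite expr1n => /eqP; by rewrite oner_eq0.
- move=> a u v /nilradP [n hu] /nilradP [m hv]; apply/nilradP.
  have hau : (a * u) ^+ n = 0 by rewrite exprMn hu mulr0.
  exists (n + m)%N; rewrite exprDn big1 // => [[i /= ltim]] _.
  case: (leqP m i) => hi.
    by rewrite -(subnKC hi) exprD hv mul0r mulr0 mul0rn.
  have hn : (n <= n + m - i)%N by lia.
  by rewrite -(subnKC hn) exprD hau !mul0r mul0rn.
Qed.

HB.instance Definition _ (R : comNzRingType) :=
  isIdealr.Build R (nilrad R) (@nilrad_idealr_closed R).

Definition almost_complemented (R : comNzRingType) : Prop :=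
  complemented_ring {ideal_quot (nilrad R)}.

(* Modulo the nilradical, zero is complemented (by 1) and every other class is the
   image of a complemented element.  Complements survive the quotient because a
   regular element stays regular there: if a c is nilpotent then a^n c^n = 0, and
   a^n is regular, so c is nilpotent. *)
From HB Require Import structures.
From mathcomp Require Import all_boot all_algebra ring_quotient.
Set Implicit Arguments. Unset Strict Implicit.
Import GRing.Theory.
Local Open Scope ring_scope.
Local Open Scope quotient_scope.

Lemma regularX (R : comNzRingType) (a : R) (n : nat) :
  regular a -> regular (a ^+ n).
Proof.
move=> rega; elim: n => [|n IHn] c; first by rewrite expr0 mul1r.
by rewrite exprS -mulrA => /rega /IHn.
Qed.

Lemma complemented0 (R : comNzRingType) : complemented_el (0 : R).
Proof. by exists 1; split=> [|c]; rewrite ?mul0r // add0r mul1r. Qed.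

Section NilradicalQuotient.

Variable R : comNzRingType.
Notation RN := {ideal_quot (nilrad R)}.

Lemma pi_nilrad_eq0 (c : R) : (\pi_RN c == 0) = (c \in nilrad R).
Proof.
have -> : (0 : RN) = \pi_RN 0 by rewrite rmorph0.
by rewrite -Quotient.idealrBE subr0.
Qed.

Lemma regular_pi_nilrad (a : R) : regular a -> regular (\pi_RN a).
Proof.
move=> rega; elim/quotW => c; rewrite -rmorphM => /eqP.
rewrite pi_nilrad_eq0 => /nilradP [n acn0].
apply/eqP; rewrite pi_nilrad_eq0; apply/nilradP; exists n.
by move: acn0; rewrite exprMn; apply: regularX.
Qed.

Lemma complemented_pi_nilrad (a : R) :
  complemented_el a -> complemented_el (\pi_RN a).
Proof.
case=> b [ab0 regab]; exists (\pi_RN b); split.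
  by rewrite -rmorphM ab0 rmorph0.
by rewrite -rmorphD; apply: regular_pi_nilrad.
Qed.

End NilradicalQuotient.

Theorem mainTheorem4 (R : comNzRingType) :
  semi_complemented R -> almost_complemented R.
Proof.
move=> semiR; elim/quotW => a.
have [|aNnil] := boolP (a \in nilrad R).
  by rewrite -pi_nilrad_eq0 => /eqP ->; apply: complemented0.
exact/complemented_pi_nilrad/semiR.
Qed.
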